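(* Let $n$ be a positive integer and let $D_n=\langle x,y\mid x^n=e,\ y^2=e,\ (xy)^2=e\rangle$ be the dihedral group with generating set $\Delta=\{x,y\}$. Then $W=W_xU_x+W_yU_y$ is a homogeneous scalar quantum walk on $C_\Delta(D_n)$ if and only if, up to a global phase, $W_x=\cos\phi$ and $W_y=i\sin\phi$ for some real $\phi$ (with both values nonzero). In particular such a walk exists; for $n=2$ this gives a homogeneous scalar quantum walk on the hypercube of dimension 2.
   Context: The Cayley graph $C_\Delta(\Gamma)$ has vertex set $\Gamma$ and directed edges $(g,g\delta)$, $g\in\Gamma,\delta\in\Delta$. Let $\ell^2(\Gamma)$ have orthonormal basis $\{|g\rangle\}_{g\in\Gamma}$ and for $\delta\in\Gamma$ let $U_\delta|g\rangle=|g\delta\rangle$. A homogeneous scalar quantum walk on $C_\Delta(\Gamma)$ is a unitary operator $W=\sum_{\delta\in\Delta}W_\delta U_\delta$ with all complex coefficients $W_\delta$ nonzero. ''Up to a global phase'' means that all coefficients may be multiplied by a common complex number of modulus one. *)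

From HB Require Import structures.
From mathcomp Require Import all_boot all_order all_algebra.
From mathcomp Require Import complex.
From mathcomp Require Import reals trigo.
Set Implicit Arguments. Unset Strict Implicit. Unset Printing Implicit Defensive.
Import Order.TTheory GRing.Theory Num.Theory.
Local Open Scope ring_scope.

(* The dihedral group D_n, n = m.+1 >= 1, as the concrete model           *)
(*   { x^k y^b | k in Z/nZ, b in {0,1} },  encoded as the pair (k, b).     *)
(* Multiplication: x^k y^b * x^l y^c = x^(k + (-1)^b l) y^(b xor c),      *)
(* which is the group < x, y | x^n = e, y^2 = e, (xy)^2 = e >.            *)
Definition dihedral (m : nat) : Type := ('I_m.+1 * bool)%type.
HB.instance Definition _ (m : nat) := Finite.copy (dihedral m) ('I_m.+1 * bool)%type.

Definition dmul (m : nat) (g h : dihedral m) : dihedral m :=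
  (((g.1 : 'I_m.+1) + (if g.2 then - h.1 else h.1))%R, addb g.2 h.2).

Definition dunit (m : nat) : dihedral m := ((0%R : 'I_m.+1), false).
Definition dx (m : nat) : dihedral m := ((inZp 1 : 'I_m.+1), false).
Definition dy (m : nat) : dihedral m := ((0%R : 'I_m.+1), true).

(* Operators on l^2(T) for a finite type T, given by their matrix entries *)
(* A h g = <h| A |g>, with complex coefficients in R[i].                  *)
Definition op (R : rcfType) (T : finType) := T -> T -> R[i].

Definition shift (R : rcfType) (T : finType) (mul : T -> T -> T) (d : T)
  : op R T := fun h g => ((h == mul g d)%:R : R[i]).

Definition op_comp (R : rcfType) (T : finType) (A B : op R T) : op R T :=
  fun h g => \sum_k A h k * B k g.

Definition op_adj (R : rcfType) (T : finType) (A : op R T) : op R T :=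
  fun h g => conjc (A g h).

Definition op_id (R : rcfType) (T : finType) : op R T :=
  fun h g => ((h == g)%:R : R[i]).

Definition unitary (R : rcfType) (T : finType) (A : op R T) : Prop :=
  (forall h g, op_comp A (op_adj A) h g = @op_id R T h g) /\
  (forall h g, op_comp (op_adj A) A h g = @op_id R T h g).

Definition dihedral_walk (R : rcfType) (m : nat) (Wx Wy : R[i]) : op R (dihedral m) :=
  fun h g => Wx * shift R (@dmul m) (dx m) h g + Wy * shift R (@dmul m) (dy m) h g.

Definition is_hsqw_dihedral (R : rcfType) (m : nat) (Wx Wy : R[i]) : Prop :=
  Wx != 0 /\ Wy != 0 /\ unitary (@dihedral_walk R m Wx Wy).

From HB Require Import structures.
From mathcomp Require Import all_boot all_order all_algebra.
From mathcomp Require Import complex.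
From mathcomp Require Import reals trigo.
From mathcomp Require Import ring lra.
Set Implicit Arguments. Unset Strict Implicit. Unset Printing Implicit Defensive.
Import Order.TTheory GRing.Theory Num.Theory.
Local Open Scope ring_scope.

(* For W = a U_x + b U_y, both W W^* and W^* W are (|a|^2 + |b|^2) I plus
   cross terms a b^* and b a^* (or their conjugates) carried by translations by
   x^-1 y and y^-1 x (resp. y x^-1 and x y^-1).  In D_n each of these pairs is a
   single reflection, and a reflection moves every vertex, so W is unitary iff
   |a|^2 + |b|^2 = 1 and a b^* + b a^* = 0.  The latter says that b / c is
   purely imaginary, i q, for the phase c = a / |a|; then |a|^2 + q^2 = 1 makes
   (|a|, q) = (cos phi, sin phi). *)

Section TranslationWalk.
Variables (R : rcfType) (T : finType) (mul : T -> T -> T) (inv : T -> T).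
Hypotheses (mulA : associative mul)
  (mulK : forall d, cancel (mul^~ d) (mul^~ (inv d)))
  (mulKV : forall d, cancel (mul^~ (inv d)) (mul^~ d)).

Local Notation U := (shift R mul).
Local Notation ind b := ((b)%:R : R[i]).

Definition walk2 (a b : R[i]) (d e : T) : op R T :=
  fun h g => a * U d h g + b * U e h g.

Lemma eq_mulr_mulV (h k d : T) : (h == mul k d) = (k == mul h (inv d)).
Proof. by apply/eqP/eqP => ->; rewrite ?mulK ?mulKV. Qed.

Lemma sum_ind_eq (p : T) (F : T -> R[i]) : \sum_k ind (k == p) * F k = F p.
Proof.
rewrite (bigD1 p) //= eqxx mul1r big1 ?addr0 // => k /negbTE ->.
by rewrite mul0r.
Qed.

Lemma sum_scaled (x y : R[i]) (F G : T -> R[i]) :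
  \sum_k (x * F k) * (y * G k) = x * y * \sum_k F k * G k.
Proof. by rewrite mulr_sumr; apply: eq_bigr => k _; rewrite mulrACA. Qed.

Lemma sum_shift_shiftJ (d e h g : T) :
  \sum_k U d h k * (U e g k)^*%C = ind (g == mul h (mul (inv d) e)).
Proof.
rewrite /shift; under eq_bigr => k _ do rewrite conjc_nat (eq_mulr_mulV h).
by rewrite sum_ind_eq mulA.
Qed.

Lemma sum_shiftJ_shift (d e h g : T) :
  \sum_k (U d k h)^*%C * U e k g = ind (h == mul g (mul e (inv d))).
Proof.
rewrite /shift; under eq_bigr => k _ do rewrite conjc_nat.
by rewrite sum_ind_eq eq_sym eq_mulr_mulV -mulA.
Qed.

Lemma mul_mulVr (h d : T) : mul h (mul (inv d) d) = h.
Proof. by rewrite mulA mulKV. Qed.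

Lemma mul_mulrV (h d : T) : mul h (mul d (inv d)) = h.
Proof. by rewrite mulA mulK. Qed.

Lemma comp_walk2_adj (a b : R[i]) (d e h g : T) :
  op_comp (walk2 a b d e) (op_adj (walk2 a b d e)) h g =
  (a * a^*%C + b * b^*%C) * ind (h == g)
  + a * b^*%C * ind (g == mul h (mul (inv d) e))
  + b * a^*%C * ind (g == mul h (mul (inv e) d)).
Proof.
rewrite /op_comp /op_adj /walk2.
under eq_bigr => k _ do rewrite rmorphD !rmorphM /= mulrDl !mulrDr.
rewrite !big_split /= !sum_scaled !sum_shift_shiftJ !mul_mulVr (eq_sym g h).
ring.
Qed.

Lemma comp_adj_walk2 (a b : R[i]) (d e h g : T) :
  op_comp (op_adj (walk2 a b d e)) (walk2 a b d e) h g =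
  (a * a^*%C + b * b^*%C) * ind (h == g)
  + a^*%C * b * ind (h == mul g (mul e (inv d)))
  + b^*%C * a * ind (h == mul g (mul d (inv e))).
Proof.
rewrite /op_comp /op_adj /walk2.
under eq_bigr => k _ do rewrite rmorphD !rmorphM /= mulrDl !mulrDr.
rewrite !big_split /= !sum_scaled !sum_shiftJ_shift !mul_mulrV.
ring.
Qed.

(* [g0] only witnesses that [T] is nonempty. *)
Lemma unitary_walk2P (g0 : T) (a b : R[i]) (d e : T) :
  mul (inv d) e = mul (inv e) d -> mul e (inv d) = mul d (inv e) ->
  (forall h, mul h (mul (inv d) e) != h) -> (forall h, mul h (mul e (inv d)) != h) ->
  unitary (walk2 a b d e) <-> a * a^*%C + b * b^*%C = 1 /\ a * b^*%C + b * a^*%C = 0.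
Proof.
move=> zE z'E zfree z'free.
have zfreeE h : (h == mul h (mul (inv d) e)) = false by rewrite eq_sym (negbTE (zfree h)).
have z'freeE h : (h == mul h (mul e (inv d))) = false by rewrite eq_sym (negbTE (z'free h)).
split.
  case=> WWadj _; split.
    have := WWadj g0 g0.
    by rewrite comp_walk2_adj /op_id -zE !eqxx zfreeE !mulr0 !addr0 mulr1.
  have := WWadj g0 (mul g0 (mul (inv d) e)).
  by rewrite comp_walk2_adj /op_id -zE eqxx zfreeE mulr0 add0r !mulr1.
case=> norm1 cross0.
have cross0J : a^*%C * b + b^*%C * a = 0.
  by have := congr1 conjc cross0; rewrite conjc0 rmorphD !rmorphM /= !conjcK.
split=> h g; rewrite ?comp_walk2_adj ?comp_adj_walk2 -?zE -?z'E -addrA -mulrDl.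
  by rewrite cross0 mul0r addr0 norm1 mul1r.
by rewrite z'E cross0J mul0r addr0 norm1 mul1r.
Qed.
End TranslationWalk.

Section Dihedral.
Variable m : nat.
Local Notation D := (dihedral m).
Local Notation dmul := (@dmul m).

Definition dinv (g : D) : D := (if g.2 then g.1 else - g.1, g.2).

Lemma dmulA : associative dmul.
Proof.
case=> [g [|]] [h [|]] [k [|]]; rewrite /dmul /=; congr (_, _);
  by rewrite ?opprD ?opprK addrA.
Qed.

Lemma dmulK (d : D) : cancel (dmul^~ d) (dmul^~ (dinv d)).
Proof.
move=> g; case: d g => [d [|]] [g [|]]; rewrite /dmul /dinv /=; congr (_, _);
  by rewrite ?addrK ?subrK ?addbb ?opprK.
Qed.

Lemma dmulKV (d : D) : cancel (dmul^~ (dinv d)) (dmul^~ d).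
Proof.
move=> g; case: d g => [d [|]] [g [|]]; rewrite /dmul /dinv /=; congr (_, _);
  by rewrite ?addrK ?subrK ?addbb ?opprK.
Qed.

Lemma dmul_reflection_neq (h z : D) : z.2 -> dmul h z != h.
Proof. by case: h z => h [|] [z [|]] //= _; apply/eqP => -[]. Qed.

Lemma dinvx_dy : dmul (dinv (dx m)) (dy m) = dmul (dinv (dy m)) (dx m).
Proof. by rewrite /dmul /dinv /= addr0 add0r. Qed.

Lemma dy_dinvx : dmul (dy m) (dinv (dx m)) = dmul (dx m) (dinv (dy m)).
Proof. by rewrite /dmul /dinv /= opprK addr0 add0r. Qed.

Lemma unitary_dihedral_walkP (R : rcfType) (a b : R[i]) :
  unitary (@dihedral_walk R m a b) <->
  a * a^*%C + b * b^*%C = 1 /\ a * b^*%C + b * a^*%C = 0.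
Proof.
apply: (unitary_walk2P dmulA dmulK dmulKV (dunit m) a b dinvx_dy dy_dinvx) => h;
  exact: dmul_reflection_neq.
Qed.
End Dihedral.

Lemma conjcM (R : rcfType) : {morph @conjc R : x y / x * y}.
Proof. exact: rmorphM. Qed.

Lemma imaginary_of_conjcN (R : rcfType) (w : R[i]) :
  w^*%C = - w -> w = 'i%C * ((complex.Im w)%:C)%C.
Proof. by case: w => x y; simpc => -[hx]; congr (Complex _ _); lra. Qed.

Lemma unitary_coeffs_polar (R : rcfType) (a b : R[i]) : a != 0 ->
  (a * a^*%C + b * b^*%C = 1 /\ a * b^*%C + b * a^*%C = 0) <->
  exists (c : R[i]) (p q : R),
    `|c| = 1 /\ p ^+ 2 + q ^+ 2 = 1 /\ a = c * (p%:C)%C /\ b = c * ('i%C * (q%:C)%C).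
Proof.
move=> a_neq0; split; last first.
  case=> c [p [q [c1 [pq1 [-> ->]]]]].
  have c1' : complex.Re c ^+ 2 + complex.Im c ^+ 2 = 1.
    by apply: complexI; rewrite add_Re2_Im2 c1 expr1n.
  case: c {c1} c1' => c1 c2 /= c1'.
  by split; simpc; congr (Complex _ _); nra.
case=> norm1 cross0.
set p := Num.sqrt (complex.Re a ^+ 2 + complex.Im a ^+ 2).
have normaE : `|a| = (p%:C)%C by exact: normc_def.
have pC_neq0 : (p%:C)%C != 0 by rewrite -normaE normr_eq0.
(* [c] is the phase of [a] and [w = b / c]. *)
set c := a / (p%:C)%C; set w := b * a^*%C / (p%:C)%C.
have wJ : w^*%C = - w.
  have crossE : b^*%C * a = - (b * a^*%C).
    by apply/eqP; rewrite -addr_eq0 mulrC cross0.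
  by rewrite /w !conjcM conjc_inv conjc_real conjcK crossE mulNr.
have normw : `|w| = `|b|.
  by rewrite /w normf_div normrM normcJ -normaE normr_id mulfK // normr_eq0.
have wE := imaginary_of_conjcN wJ; set q := complex.Im w in wE.
exists c, p, q; split; [|split; [|split]].
- by rewrite normf_div -normaE normr_id divff // normr_eq0.
- apply: complexI; rewrite rmorphD rmorph1 !rmorphXn /= -norm1 -normaE !sqr_normc.
  congr (_ + _); rewrite -sqr_normc -normw sqr_normc wJ mulrN -expr2 wE.
  by rewrite exprMn sqr_i mulN1r opprK.
- by rewrite divfK.
- rewrite -wE /c /w.
  have -> : a / (p%:C)%C * (b * a^*%C / (p%:C)%C) = b * (a * a^*%C) / (p%:C)%C ^+ 2.
    by field.
  by rewrite -sqr_normc normaE mulfK // expf_neq0.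
Qed.

Lemma exists_cos_sin (R : realType) (p q : R) : p ^+ 2 + q ^+ 2 = 1 ->
  exists phi : R, cos phi = p /\ sin phi = q.
Proof.
move=> pq1.
have p_itv : -1 <= p <= 1 by apply/andP; split; nra.
have sin_acosE : sin (acos p) = `|q|.
  by rewrite sin_acos // -pq1 addrC addKr sqrtr_sqr.
case: (leP 0 q) => q_sign.
  exists (acos p); split; first by rewrite acosK // in_itv.
  by rewrite sin_acosE ger0_norm.
exists (- acos p); split; first by rewrite cosN acosK // in_itv.
by rewrite sinN sin_acosE ltr0_norm ?opprK.
Qed.

Theorem mainTheorem3 (R : realType) (m : nat) :
  (forall Wx Wy : R[i],
      is_hsqw_dihedral m Wx Wy <->
      (Wx != 0 /\ Wy != 0 /\
       exists (c : R[i]) (phi : R),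
         `|c| = 1 /\ Wx = c * ((cos phi)%:C)%C /\ Wy = c * (('i)%C * ((sin phi)%:C)%C))) /\
  (exists Wx Wy : R[i], is_hsqw_dihedral m Wx Wy).
Proof.
split.
  move=> Wx Wy; split=> -[Wx_neq0 [Wy_neq0 H]]; do 2 split=> //.
    move: H => /unitary_dihedral_walkP /(unitary_coeffs_polar _ Wx_neq0).
    case=> c [p [q [c1 [pq1 [-> ->]]]]].
    by have [phi [<- <-]] := exists_cos_sin pq1; exists c, phi.
  apply/unitary_dihedral_walkP/(unitary_coeffs_polar _ Wx_neq0).
  case: H => c [phi [c1 [-> ->]]].
  by exists c, (cos phi), (sin phi); rewrite cos2Dsin2.
have pq1 : (3 / 5) ^+ 2 + (4 / 5) ^+ 2 = 1 :> R by field.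
have Wx_neq0 : ((3 / 5 : R)%:C)%C != 0.
  by rewrite fmorph_eq0 mulf_neq0 ?invr_eq0 ?pnatr_eq0.
exists ((3 / 5)%:C)%C, ('i%C * ((4 / 5)%:C)%C); split=> //; split.
  rewrite mulf_neq0 ?fmorph_eq0 ?mulf_neq0 ?invr_eq0 ?pnatr_eq0 //.
  by rewrite eq_complex /= oner_eq0 andbF.
apply/unitary_dihedral_walkP/(unitary_coeffs_polar _ Wx_neq0).
by exists 1, (3 / 5), (4 / 5); rewrite normr1 !mul1r.
Qed.
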